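(* Consider the fixed-design additive regression setting and estimator described in the context, and assume $g^*=\sum_{j=1}^pg^*_j\in\mathcal G$ is additive with $\sum_j\|g^*_j\|_{F,j}\le C_1M_F$ and $\sum_j\|g^*_j\|_n^q\le C_1^qM_q$ for some $0\le q\le1$ and $M_q,M_F>0$ (possibly depending on $(n,p)$). Suppose that for constants $B_0>0$ and $0<\beta_0<2$, $$\max_{j}\int_0^\delta H^{1/2}(u,\mathcal G_j(\delta),\|\cdot\|_n)\,du\le B_0\delta^{1-\beta_0/2},\quad 0<\delta\le1,$$ and that the tuning uses $\psi_{nj}(\delta)=B_0\delta^{1-\beta_0/2}$, $\gamma_{nj}=\gamma_n(q)=B_0^{2/(2+\beta_0(1-q))}n^{-1/(2+\beta_0(1-q))}$ and $w_{nj}=w_n(q)=\gamma_n(q)^{1-q}$ for all $j$. Assume the sub-Gaussian noise condition, and the empirical compatibility condition with constants $\kappa_0>0,\xi_0>1$ for $S=\{1\le j\le p:\|g^*_j\|_n>C_0\lambda_{nj}\}$ for some constant $C_0>0$. If $0<w_n(q)\le1$ for sufficiently large $n$, then for any $A_0>(\xi_0+1)/(\xi_0-1)$ there is a constant $K$ depending only on $(q,A_0,C_0,\xi_0,\kappa_0)$ such that, with probability at least $1-\epsilon$, $$\|\hat g-g^*\|_n^2+(A_0-1)R_n(\hat g-g^* )\le K\,C_1^2(M_F+M_q)\Big\{\gamma_n(q)+\sqrt{\log(p/\epsilon)/n}\Big\}^{2-q}.$$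
   Context: Data: $(Y_i,X_i)$, $i=1,\dots,n$, $Y_i=g^*(X_i)+\varepsilon_i$. Fixed design: $X_1,\dots,X_n$ deterministic; probabilities refer to the noise. For $j=1,\dots,p$, $x^{(j)}$ is a fixed sub-vector of coordinates of $x$, $\mathcal G_j$ is a vector space of functions of $x^{(j)}$ with semi-norm $\|\cdot\|_{F,j}$, $\mathcal G=\{\sum_jg_j(x^{(j)}):g_j\in\mathcal G_j\}$; each $g\in\mathcal G$ comes with a decomposition $g=\sum_jg_j$. $\|f\|_n^2=n^{-1}\sum_if(X_i)^2$, $\|Y-g\|_n^2=n^{-1}\sum_i\{Y_i-g(X_i)\}^2$, $\langle\varepsilon,f\rangle_n=n^{-1}\sum_i\varepsilon_if(X_i)$; $H(u,\mathcal F,\|\cdot\|)$ is the log covering number at radius $u$; $\mathcal G_j(\delta)=\{f\in\mathcal G_j:\|f\|_{F,j}+\|f\|_n/\delta\le1\}$. Convention: $\|g_j\|_n^0=1$ if $\|g_j\|_n>0$ and $0$ otherwise. Sub-Gaussian noise condition: $\varepsilon_i$ independent, mean zero, $\max_iD_0E\exp(\varepsilon_i^2/D_0)\le D_1$. $C_1=C_1(D_0,D_1)>0$ is a constant depending only on $(D_0,D_1)$ such that for every $\delta>0$, every class $\mathcal F$ with $\sup_{\mathcal F}\|f\|_n\le\delta$ and every $\psi\ge\int_0^\delta H^{1/2}(u,\mathcal F,\|\cdot\|_n)du$, $P\{\sup_{\mathcal F}|\langle\varepsilon,f\rangle_n|/C_1>n^{-1/2}\psi+\delta\sqrt{t/n}\}\le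 e^{-t}$, $t>0$. Tuning and estimator: $0<\epsilon<1$; $\lambda_{nj}=C_1\{\gamma_{nj}+\sqrt{\log(p/\epsilon)/n}\}$, $\rho_{nj}=\lambda_{nj}w_{nj}$, $R_n(g)=\sum_j(\rho_{nj}\|g_j\|_{F,j}+\lambda_{nj}\|g_j\|_n)$; for $A_0>1$, $\hat g=\sum_j\hat g_j$ minimizes $\|Y-g\|_n^2/2+A_0R_n(g)$ over $g\in\mathcal G$ and decompositions; $R_n(\hat g-g^* )$ is computed with components $\hat g_j-g^*_j$. Empirical compatibility condition for $(S,\kappa_0,\xi_0)$: for all $f_j\in\mathcal G_j$, $f=\sum_jf_j$, if $\sum_j\lambda_{nj}w_{nj}\|f_j\|_{F,j}+\sum_{j\notin S}\lambda_{nj}\|f_j\|_n\le\xi_0\sum_{j\in S}\lambda_{nj}\|f_j\|_n$ then $\kappa_0^2(\sum_{j\in S}\lambda_{nj}\|f_j\|_n)^2\le(\sum_{j\in S}\lambda_{nj}^2)\|f\|_n^2$. *)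

From HB Require Import structures.
From mathcomp Require Import all_boot all_order all_algebra.
From mathcomp Require Import all_classical all_reals all_analysis.
Set Implicit Arguments. Unset Strict Implicit. Unset Printing Implicit Defensive.
Import Order.TTheory GRing.Theory Num.Theory.
Import numFieldNormedType.Exports.
Local Open Scope classical_set_scope.
Local Open Scope ring_scope.

Section AdditiveRegression.
Variables (R : realType) (n dim : nat) (X : 'I_n -> 'rV[R]_dim).

Notation fn := ('rV[R]_dim -> R).

Definition empnorm (f : fn) : R := Num.sqrt (n%:R^-1 * \sum_(i < n) f (X i) ^+ 2).

Definition empinner (e : 'I_n -> R) (f : fn) : R :=
  n%:R^-1 * \sum_(i < n) e i * f (X i).

Definition emploss (Y : 'I_n -> R) (g : fn) : R :=
  n%:R^-1 * \sum_(i < n) (Y i - g (X i)) ^+ 2.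

Definition covers (s : seq fn) (u : R) (F : set fn) : Prop :=
  forall f, F f -> has (fun c => empnorm (fun x => f x - c x) <= u) s.

(* covering number N(u, F, ||.||_n) (+oo if no finite cover) *)
Definition covnum (F : set fn) (u : R) : \bar R :=
  ereal_inf [set ((size s)%:R)%:E | s in [set s | covers s u F]].

Definition sqrt_entropy (F : set fn) (u : R) : \bar R :=
  match covnum F u with
  | EFin r => (Num.sqrt (ln r))%:E
  | _ => +oo%E
  end.

Definition entropy_integral (F : set fn) (delta : R) : \bar R :=
  let I : set R := [set` `]0, delta]] in
  (\int[@lebesgue_measure R]_(u in I) sqrt_entropy F u)%E.

Definition qpow (x q : R) : R :=
  if q == 0 then (if 0 < x then 1 else 0) else x `^ q.

Variable p : nat.

Definition gsum (g : 'I_p -> fn) : fn := fun x => \sum_(j < p) g j x.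

Definition Rpen (nF : 'I_p -> fn -> R) (lam rho : 'I_p -> R) (g : 'I_p -> fn) : R :=
  \sum_(j < p) (rho j * nF j (g j) + lam j * empnorm (g j)).

Definition objective (nF : 'I_p -> fn -> R) (lam rho : 'I_p -> R) (A0 : R)
  (Y : 'I_n -> R) (g : 'I_p -> fn) : R :=
  emploss Y (gsum g) / 2 + A0 * Rpen nF lam rho g.

Definition is_minimizer (G : 'I_p -> set fn) (nF : 'I_p -> fn -> R)
  (lam rho : 'I_p -> R) (A0 : R) (Y : 'I_n -> R) (ghat : 'I_p -> fn) : Prop :=
  (forall j, G j (ghat j)) /\
  forall g : 'I_p -> fn, (forall j, G j (g j)) ->
    objective nF lam rho A0 Y ghat <= objective nF lam rho A0 Y g.

(* structure: G_j is a vector space of functions of the sub-vector x^(j)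
   (coordinates coords j), and ||.||_{F,j} is a semi-norm on G_j *)
Definition additive_structure (coords : 'I_p -> {set 'I_dim})
  (G : 'I_p -> set fn) (nF : 'I_p -> fn -> R) : Prop :=
  forall j,
    [/\ G j (fun _ => 0),
        (forall f g, G j f -> G j g -> G j (fun x => f x + g x)),
        (forall a f, G j f -> G j (fun x => a * f x)),
        (forall f, G j f -> forall x y : 'rV[R]_dim,
            (forall k, k \in coords j -> x ord0 k = y ord0 k) -> f x = f y) &
        [/\ (forall f, G j f -> 0 <= nF j f),
            (forall a f, G j f -> nF j (fun x => a * f x) = `|a| * nF j f) &
            (forall f g, G j f -> G j g ->
               nF j (fun x => f x + g x) <= nF j f + nF j g)]].

Definition Gdelta (G : 'I_p -> set fn) (nF : 'I_p -> fn -> R) (j : 'I_p) (delta : R)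
  : set fn := [set f | G j f /\ nF j f + empnorm f / delta <= 1].

Definition compatibility (G : 'I_p -> set fn) (nF : 'I_p -> fn -> R)
  (lam w : 'I_p -> R) (S : {set 'I_p}) (kappa0 xi0 : R) : Prop :=
  forall f : 'I_p -> fn, (forall j, G j (f j)) ->
    \sum_(j < p) lam j * w j * nF j (f j)
      + \sum_(j < p | j \notin S) lam j * empnorm (f j)
      <= xi0 * \sum_(j < p | j \in S) lam j * empnorm (f j) ->
    kappa0 ^+ 2 * (\sum_(j < p | j \in S) lam j * empnorm (f j)) ^+ 2
      <= (\sum_(j < p | j \in S) lam j ^+ 2) * empnorm (gsum f) ^+ 2.

End AdditiveRegression.

Section Noise.
Local Open Scope ereal_scope.
Variables (R : realType) (d : measure_display) (Omega : measurableType d)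
  (P : probability Omega R) (n : nat).

Definition mutually_independent (eps : 'I_n -> Omega -> R) : Prop :=
  forall B : 'I_n -> set R, (forall i, measurable (B i)) ->
    P (\bigcap_(i in [set: 'I_n]) (eps i @^-1` B i)) =
    \prod_(i < n) P (eps i @^-1` B i).

Definition subgaussian (eps : 'I_n -> Omega -> R) (D0 D1 : R) : Prop :=
  (0 < D0)%R /\ mutually_independent eps /\
  forall i : 'I_n,
    [/\ measurable_fun setT (eps i),
        P.-integrable setT (fun w => (eps i w)%:E),
        \int[P]_w (eps i w)%:E = 0 &
        D0%:E * \int[P]_w (expR (eps i w ^+ 2 / D0))%:E <= D1%:E].

(* the defining property of the constant C1 (for this noise vector):
   P{ sup_F |<eps,f>_n| / C1 > n^-1/2 psi + delta sqrt(t/n) } <= e^-t,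
   stated as: the complementary event contains a measurable set of
   probability >= 1 - e^-t. *)
Definition concentration (dim : nat) (X : 'I_n -> 'rV[R]_dim) (eps : 'I_n -> Omega -> R)
  (C1 : R) : Prop :=
  forall (delta : R), (0 < delta)%R ->
  forall F : set ('rV[R]_dim -> R), (forall f, F f -> (empnorm X f <= delta)%R) ->
  forall psi : R, entropy_integral X F delta <= psi%:E ->
  forall t : R, (0 < t)%R ->
  exists E : set Omega, [/\ measurable E, (1 - expR (- t))%:E <= P E &
    forall w, E w -> forall f, F f ->
      (`|empinner X (fun i => eps i w) f| / C1
         <= Num.sqrt (n%:R^-1) * psi + delta * Num.sqrt (t / n%:R))%R].

End Noise.

(* On the event where, for every j, |<eps, f>_n| <= lam (||f||_n + w ||f||_F,j)
   on G_j (the concentration inequality on the ball G_j(w), extended to G_j by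
   homogeneity, plus a union bound over the p components), the minimality of
   ghat yields the basic inequality.  Triangle inequalities turn it into a cone
   inequality that splits the penalty of the error between the set S of large
   components of g* and the rest.  Either the error lies in the cone of the
   compatibility condition, and compatibility with AM-GM bounds everything by
   sum_S lam^2, or it does not, and everything is bounded by the penalty of g*
   off S.  Finally sum_S lam^2 and the penalty of g* off S are controlled by
   the l_q and ||.||_F budgets of g*, which gives the rate lam^(2-q). *)

From Pilot Require Import Defs.
From HB Require Import structures.
From mathcomp Require Import all_boot all_order all_algebra.
From mathcomp Require Import all_classical all_reals all_analysis.
From mathcomp Require Import ring lra.
Import Order.TTheory GRing.Theory Num.Theory.
Import numFieldNormedType.Exports.
Local Open Scope classical_set_scope.
Local Open Scope ring_scope.

Section CauchySchwarz.
Context {R : rcfType} {I : finType}.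

Lemma sum_mulr_le_sqrt (a b : I -> R) :
  \sum_i a i * b i <= Num.sqrt (\sum_i a i ^+ 2) * Num.sqrt (\sum_i b i ^+ 2).
Proof.
set A := \sum_i a i ^+ 2; set B := \sum_i b i ^+ 2; set C := \sum_i a i * b i.
have A0 : 0 <= A by apply: sumr_ge0 => i _; exact: sqr_ge0.
suff CAB : C ^+ 2 <= A * B.
  rewrite -sqrtrM // (le_trans (ler_norm C)) // -sqrtr_sqr ler_sqrt //.
  by apply: mulr_ge0 => //; apply: sumr_ge0 => i _; exact: sqr_ge0.
have [A_eq0 | A_gt0] := eqVneq A 0.
  have a0 i : a i = 0.
    apply/eqP; rewrite -sqrf_eq0; apply/eqP.
    by apply: (psumr_eq0P (fun i _ => sqr_ge0 (a i)) A_eq0).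
  by rewrite /C big1 ?expr0n ?A_eq0 ?mul0r // => i _; rewrite a0 mul0r.
have {}A_gt0 : 0 < A by rewrite lt0r A_gt0.
(* Expanding [0 <= \sum_i (A b_i - C a_i)^2] gives [0 <= A (A B - C^2)]. *)
have : 0 <= A * (A * B - C ^+ 2).
  have -> : A * (A * B - C ^+ 2) = \sum_i (A * b i - C * a i) ^+ 2.
    transitivity (\sum_i (A ^+ 2 * b i ^+ 2 - (2 * A * C) * (a i * b i)
                            + C ^+ 2 * a i ^+ 2)).
      by rewrite big_split sumrB -!mulr_sumr -/A -/B -/C /=; ring.
    by apply: eq_bigr => i _; ring.
  by apply: sumr_ge0 => i _; exact: sqr_ge0.
by rewrite pmulr_rge0 // subr_ge0.
Qed.

End CauchySchwarz.

Section EmpiricalNorm.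
Context {R : realType} {n dim : nat} (X : 'I_n -> 'rV[R]_dim).
Implicit Types f g : 'rV[R]_dim -> R.

Lemma empnorm_ge0 f : 0 <= empnorm X f.
Proof. exact: sqrtr_ge0. Qed.

Lemma sumr_sqr_ge0 f : 0 <= \sum_(i < n) f (X i) ^+ 2.
Proof. by apply: sumr_ge0 => i _; exact: sqr_ge0. Qed.

Lemma empnorm_sqr f : empnorm X f ^+ 2 = n%:R^-1 * \sum_(i < n) f (X i) ^+ 2.
Proof. by rewrite sqr_sqrtr // mulr_ge0 ?invr_ge0 ?sumr_sqr_ge0. Qed.

Lemma empnormE f :
  empnorm X f = Num.sqrt (n%:R^-1) * Num.sqrt (\sum_(i < n) f (X i) ^+ 2).
Proof. by rewrite /empnorm sqrtrM // invr_ge0. Qed.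

Lemma empnormZ a f : empnorm X (fun x => a * f x) = `|a| * empnorm X f.
Proof.
rewrite !empnormE.
have -> : \sum_(i < n) (a * f (X i)) ^+ 2 = a ^+ 2 * \sum_(i < n) f (X i) ^+ 2.
  by rewrite mulr_sumr; apply: eq_bigr => i _; rewrite exprMn.
by rewrite sqrtrM ?sqr_ge0 // sqrtr_sqr mulrCA.
Qed.

Lemma empnormD f g : empnorm X (fun x => f x + g x) <= empnorm X f + empnorm X g.
Proof.
rewrite !empnormE -mulrDr ler_wpM2l ?sqrtr_ge0 //.
have cs := sum_mulr_le_sqrt (fun i => f (X i)) (fun i => g (X i)).
rewrite -[leRHS]ger0_norm ?addr_ge0 ?sqrtr_ge0 // -sqrtr_sqr ler_sqrt ?sqr_ge0 //.
rewrite sqrrD !sqr_sqrtr ?sumr_sqr_ge0 //.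
have -> : \sum_(i < n) (f (X i) + g (X i)) ^+ 2 = \sum_(i < n) f (X i) ^+ 2
    + 2 * \sum_(i < n) f (X i) * g (X i) + \sum_(i < n) g (X i) ^+ 2.
  by rewrite mulr_sumr -!big_split /=; apply: eq_bigr => i _; ring.
by move: cs; rewrite mulr2n; lra.
Qed.

Lemma empnormB f g : empnorm X (fun x => f x - g x) <= empnorm X f + empnorm X g.
Proof.
have -> : (fun x => f x - g x) = (fun x => f x + (-1) * g x).
  by apply: funext => x; rewrite mulN1r.
by apply: le_trans (empnormD _ _) _; rewrite empnormZ normrN1 mul1r.
Qed.

Lemma empnorm_eq0 f : (0 < n)%N -> empnorm X f = 0 -> forall i, f (X i) = 0.
Proof.
move=> n_gt0 /eqP; rewrite sqrtr_eq0 pmulr_rle0 ?invr_gt0 ?ltr0n // => sum_le0 i.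
have sum_eq0 : \sum_(i < n) f (X i) ^+ 2 = 0.
  by apply/eqP; rewrite eq_le sum_le0 sumr_sqr_ge0.
apply/eqP; rewrite -sqrf_eq0; apply/eqP.
exact: (psumr_eq0P (fun i _ => sqr_ge0 (f (X i))) sum_eq0).
Qed.

Lemma empinnerZ e a f : empinner X e (fun x => a * f x) = a * empinner X e f.
Proof. by rewrite /empinner !mulr_sumr; apply: eq_bigr => i _; ring. Qed.

Lemma empinner_gsum p e (g : 'I_p -> 'rV[R]_dim -> R) :
  empinner X e (gsum g) = \sum_(j < p) empinner X e (g j).
Proof.
rewrite /empinner /gsum -mulr_sumr exchange_big /=; congr (_ * _).
by apply: eq_bigr => i _; rewrite mulr_sumr.
Qed.

Lemma emploss_expand p (gs gh : 'I_p -> 'rV[R]_dim -> R) (e : 'I_n -> R) :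
  emploss X (fun i => gsum gs (X i) + e i) (gsum gh)
  = emploss X (fun i => gsum gs (X i) + e i) (gsum gs)
    + empnorm X (gsum (fun j x => gh j x - gs j x)) ^+ 2
    - 2 * empinner X e (gsum (fun j x => gh j x - gs j x)).
Proof.
rewrite empnorm_sqr /emploss /empinner /gsum.
rewrite mulrCA -!mulrDr -mulrN -mulrDr; congr (_ * _).
by rewrite mulr_sumr -sumrN -!big_split /=; apply: eq_bigr => i _; rewrite sumrB; ring.
Qed.

End EmpiricalNorm.

Section UnionBound.
Context {R : realType} {d : measure_display} {Omega : measurableType d}
  (P : probability Omega R).

Lemma probability_bigcap_ge {p : nat} {E : 'I_p -> set Omega} {r : R} :
  (forall j, measurable (E j)) -> (forall j, ((1 - r)%:E <= P (E j))%E) ->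
  exists2 F : set Omega,
    measurable F /\ ((1 - p%:R * r)%:E <= P F)%E & forall j, F `<=` E j.
Proof.
move=> mE PE.
have PE_fin A : measurable A -> P A = (fine (P A))%:E.
  by move=> mA; rewrite fineK // fin_num_measure.
pose Ec k := [set w | exists j : 'I_p, val j = k /\ ~ E j w].
have EcE (j : 'I_p) : Ec j = ~` E j.
  apply/seteqP; split => [w [i [/val_inj -> //]]|w Ejw]; by exists j.
have mEc k : `I_p k -> measurable (Ec k).
  by move=> /= kp; rewrite -[k]/(val (Ordinal kp)) EcE; exact: measurableC.
pose U := \big[setU/set0]_(k < p) Ec k.
have mU : measurable U by apply: bigsetU_measurable => k _; exact: (mEc _ (ltn_ord k)).
have PU : (P U <= (p%:R * r)%:E)%E.
  apply: le_trans (content_subadditive P mEc mU (@subset_refl _ U)) _.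
  have -> : (p%:R * r)%:E = (\sum_(j < p) r%:E)%E.
    by rewrite sumEFin sumr_const card_ord mulr_natl.
  apply: lee_sum => j _; rewrite EcE.
  change (P (~` E j) <= r%:E)%E; rewrite probability_setC //.
  by move: (PE j); rewrite (PE_fin _ (mE j)) -EFinB !lee_fin; lra.
exists (~` U); last first.
  move=> j w notUw; apply: contrapT => notEjw; apply: notUw.
  by rewrite /U -bigcup_mkord; exists j; [exact: ltn_ord | rewrite EcE].
split; first exact: measurableC.
by move: PU; rewrite probability_setC // (PE_fin U mU) -EFinB !lee_fin; lra.
Qed.

End UnionBound.

Lemma amgm_sqr_le {R : realDomainType} (x y z : R) :
  0 <= y -> 0 <= z -> x ^+ 2 <= y * z -> 2 * x <= y + z.
Proof.
move=> y0 z0 xyz; have sq : (2 * x) ^+ 2 <= (y + z) ^+ 2 by have := sqr_ge0 (y - z); nra.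
apply: le_trans (ler_norm _) _.
by rewrite -ler_sqr ?nnegrE ?addr_ge0 // -normrX ger0_norm ?sqr_ge0.
Qed.

Section OracleConstants.
Context {R : realFieldType}.

Definition oracle_K1 (A0 kappa0 : R) := 16 * A0 ^+ 2 / kappa0 ^+ 2.

Definition cone_gap (A0 xi0 : R) := A0 - 1 - (A0 + 1) / xi0.

Definition oracle_K2 (A0 xi0 : R) :=
  8 * A0 + 2 * A0 * (A0 - 1) * (1 + xi0^-1) / cone_gap A0 xi0.

Context {A0 xi0 kappa0 : R}.
Hypotheses (xi0_gt1 : 1 < xi0) (A0_gt : (xi0 + 1) / (xi0 - 1) < A0).

Lemma A0_gt1 : 1 < A0.
Proof.
have xi0B1_gt0 : 0 < xi0 - 1 by rewrite subr_gt0.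
by move: A0_gt; rewrite ltr_pdivrMr // -(ltr_pM2r xi0B1_gt0) mul1r; nra.
Qed.

Lemma cone_gap_gt0 : 0 < cone_gap A0 xi0.
Proof.
have xi0B1_gt0 : 0 < xi0 - 1 by rewrite subr_gt0.
move: A0_gt; rewrite ltr_pdivrMr // /cone_gap subr_gt0 ltr_pdivrMr; first nra.
exact: lt_trans ltr01 xi0_gt1.
Qed.

Lemma oracle_K1_ge0 : 0 <= oracle_K1 A0 kappa0.
Proof. by rewrite /oracle_K1 divr_ge0 ?sqr_ge0 // mulr_ge0 ?sqr_ge0. Qed.

Lemma oracle_K2_ge0 : 0 <= oracle_K2 A0 xi0.
Proof.
have xi0V_gt0 : 0 < xi0^-1 by rewrite invr_gt0 (lt_trans ltr01 xi0_gt1).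
have := A0_gt1; have := cone_gap_gt0; rewrite /oracle_K2 => gap_gt0 A0gt1.
by rewrite addr_ge0 ?divr_ge0 ?mulr_ge0 //; lra.
Qed.

(* Read [D] as the squared error, [a] and [b] as [pen_on] and [pen_off] of the
   error, [s] as [\sum_(j in S) lam j ^+ 2] and [eta] as [pen_off] of g*. *)
Lemma cone_oracle_bound (D a b s eta : R) : 0 < kappa0 ->
  0 <= D -> 0 <= a -> 0 <= b -> 0 <= s -> 0 <= eta ->
  D / 2 + (A0 - 1) * b <= (A0 + 1) * a + 2 * A0 * eta ->
  (b <= xi0 * a -> kappa0 ^+ 2 * a ^+ 2 <= s * D) ->
  D + (A0 - 1) * (a + b) <= oracle_K1 A0 kappa0 * s + oracle_K2 A0 xi0 * eta.
Proof.
move=> kappa0_gt0 D0 a0 b0 s0 eta0 cone compat.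
have A0gt1 := A0_gt1; have gap_gt0 := cone_gap_gt0.
have xi0_gt0 : 0 < xi0 := lt_trans ltr01 xi0_gt1.
have xi0V_gt0 : 0 < xi0^-1 by rewrite invr_gt0.
have K2_ge : 8 * A0 * eta <= oracle_K2 A0 xi0 * eta.
  by rewrite ler_wpM2r // lerDl divr_ge0 ?mulr_ge0 //; lra.
have [b_le | b_gt] := lerP b (xi0 * a).
- have amgm : 2 * (A0 * a) <= D / 4 + 4 * A0 ^+ 2 * (s / kappa0 ^+ 2).
    have t_ge0 : 0 <= s / kappa0 ^+ 2 by rewrite divr_ge0 ?sqr_ge0.
    have a2_le : a ^+ 2 <= s / kappa0 ^+ 2 * D.
      by rewrite mulrAC ler_pdivlMr ?exprn_gt0 // mulrC; exact: compat.
    apply: amgm_sqr_le; [lra | by rewrite mulr_ge0 // mulr_ge0 ?sqr_ge0 |].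
    rewrite exprMn (_ : D / 4 * _ = A0 ^+ 2 * (s / kappa0 ^+ 2 * D)).
      by rewrite ler_wpM2l ?sqr_ge0.
    by field; rewrite gt_eqF.
  have -> : oracle_K1 A0 kappa0 * s = 16 * A0 ^+ 2 * (s / kappa0 ^+ 2).
    by rewrite /oracle_K1 mulrAC -mulrA.
  nra.
- have a_le : a <= b / xi0 by rewrite ler_pdivlMr // mulrC ltW.
  have cone' : D / 2 + cone_gap A0 xi0 * b <= 2 * A0 * eta.
    have : (A0 + 1) * a <= (A0 + 1) * (b / xi0) by apply: ler_wpM2l => //; lra.
    by rewrite /cone_gap mulrA; lra.
  have b_le : b <= 2 * A0 * eta / cone_gap A0 xi0.
    by rewrite ler_pdivlMr // mulrC (le_trans _ cone') // lerDr divr_ge0.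
  have ab_le : (A0 - 1) * (a + b)
      <= (A0 - 1) * (1 + xi0^-1) * (2 * A0 * eta / cone_gap A0 xi0).
    rewrite -mulrA; apply: ler_wpM2l; first lra.
    apply: le_trans (_ : (1 + xi0^-1) * b <= _); first by move: a_le; rewrite mulrC; lra.
    by apply: ler_wpM2l => //; lra.
  have -> : oracle_K2 A0 xi0 * eta
      = 8 * A0 * eta + (A0 - 1) * (1 + xi0^-1) * (2 * A0 * eta / cone_gap A0 xi0).
    by rewrite /oracle_K2; field; rewrite !gt_eqF.
  have K1s_ge0 : 0 <= oracle_K1 A0 kappa0 * s by rewrite mulr_ge0 // oracle_K1_ge0.
  have gapb_ge0 : 0 <= cone_gap A0 xi0 * b by rewrite mulr_ge0 // ltW.
  lra.
Qed.

End OracleConstants.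

(* [pen_off f <= xi0 * pen_on f] is the cone condition of [compatibility]. *)
Definition pen_on {R : realType} {n dim p : nat} (X : 'I_n -> 'rV[R]_dim)
    (lam : 'I_p -> R) (S : {set 'I_p}) (f : 'I_p -> 'rV[R]_dim -> R) : R :=
  \sum_(j < p | j \in S) lam j * empnorm X (f j).

Definition pen_off {R : realType} {n dim p : nat} (X : 'I_n -> 'rV[R]_dim)
    (nF : 'I_p -> ('rV[R]_dim -> R) -> R) (lam w : 'I_p -> R) (S : {set 'I_p})
    (f : 'I_p -> 'rV[R]_dim -> R) : R :=
  \sum_(j < p) lam j * w j * nF j (f j) + \sum_(j < p | j \notin S) lam j * empnorm X (f j).

Section Penalty.
Context {R : realType} {n dim p : nat} {X : 'I_n -> 'rV[R]_dim}
  {coords : 'I_p -> {set 'I_dim}} {G : 'I_p -> set ('rV[R]_dim -> R)}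
  {nF : 'I_p -> ('rV[R]_dim -> R) -> R}.
Hypothesis hG : additive_structure coords G nF.
Context {lam w : 'I_p -> R} {S : {set 'I_p}}.
Hypotheses (lam_ge0 : forall j, 0 <= lam j) (w_ge0 : forall j, 0 <= w j).
Implicit Types f g : 'I_p -> 'rV[R]_dim -> R.

Local Notation pen_on := (pen_on X lam S).
Local Notation pen_off := (pen_off X nF lam w S).

Lemma Rpen_split f : Rpen X nF lam (fun j => lam j * w j) f = pen_on f + pen_off f.
Proof.
rewrite /Rpen /pen_on /pen_off big_split /= [Y in _ + Y](bigID (fun j => j \in S)) /=.
by rewrite addrCA addrA.
Qed.

Lemma seminormB j (f g : 'rV[R]_dim -> R) : G j f -> G j g ->
  nF j (fun x => f x - g x) <= nF j f + nF j g.
Proof.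
have [_ _ GZ _ [_ nFZ nFD]] := hG j => Gf Gg.
have -> : (fun x => f x - g x) = (fun x => f x + (-1) * g x).
  by apply: funext => x; rewrite mulN1r.
by apply: le_trans (nFD _ _ Gf (GZ _ _ Gg)) _; rewrite nFZ // normrN1 mul1r.
Qed.

Lemma pen_on_ge0 f : 0 <= pen_on f.
Proof. by apply: sumr_ge0 => j _; rewrite mulr_ge0 ?empnorm_ge0. Qed.

Lemma pen_off_ge0 f : (forall j, G j (f j)) -> 0 <= pen_off f.
Proof.
move=> Gf; apply: addr_ge0; apply: sumr_ge0 => j _; rewrite mulr_ge0 ?empnorm_ge0 //.
  by rewrite mulr_ge0.
by have [_ _ _ _ [nF_ge0 _ _]] := hG j; exact: nF_ge0.
Qed.

Lemma pen_onB f g : pen_on (fun j x => f j x - g j x) <= pen_on f + pen_on g.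
Proof.
rewrite /pen_on -big_split /=; apply: ler_sum => j _.
by rewrite -mulrDr ler_wpM2l // empnormB.
Qed.

Lemma pen_offB f g : (forall j, G j (f j)) -> (forall j, G j (g j)) ->
  pen_off (fun j x => f j x - g j x) <= pen_off f + pen_off g.
Proof.
move=> Gf Gg; rewrite /pen_off addrACA -!big_split /=.
apply: lerD; apply: ler_sum => j _; rewrite -mulrDr ler_wpM2l ?mulr_ge0 //.
  exact: seminormB.
exact: empnormB.
Qed.

Section OracleInequality.
Context {gstar ghat : 'I_p -> 'rV[R]_dim -> R} {e : 'I_n -> R} {A0 : R}.
Hypothesis Ggstar : forall j, G j (gstar j).
Hypothesis noise_le : forall j (h : 'rV[R]_dim -> R), G j h ->
  `|empinner X e h| <= lam j * (empnorm X h + w j * nF j h).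
Hypothesis ghat_min : is_minimizer X G nF lam (fun j => lam j * w j) A0
  (fun i => gsum gstar (X i) + e i) ghat.

Local Notation Rpen := (Rpen X nF lam (fun j => lam j * w j)).
Local Notation diff := (fun j x => ghat j x - gstar j x).

Lemma G_diff j : G j (fun x => ghat j x - gstar j x).
Proof.
have [_ GD GZ _ _] := hG j; have [Gghat _] := ghat_min.
have -> : (fun x => ghat j x - gstar j x) = (fun x => ghat j x + (-1) * gstar j x).
  by apply: funext => x; rewrite mulN1r.
exact: GD (Gghat j) (GZ _ _ (Ggstar j)).
Qed.

Lemma basic_inequality :
  empnorm X (gsum diff) ^+ 2 / 2 + A0 * Rpen ghat <= Rpen diff + A0 * Rpen gstar.
Proof.
have [Gghat /(_ gstar Ggstar)] := ghat_min; rewrite /objective emploss_expand.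
suff : empinner X e (gsum diff) <= Rpen diff by lra.
rewrite empinner_gsum /Rpen /Defs.Rpen; apply: ler_sum => j _.
have := noise_le _ _ (G_diff j); rewrite mulrDr addrC mulrA.
exact: le_trans (ler_norm _).
Qed.

Lemma cone_inequality : 0 <= A0 ->
  empnorm X (gsum diff) ^+ 2 / 2 + (A0 - 1) * pen_off diff
  <= (A0 + 1) * pen_on diff + 2 * A0 * pen_off gstar.
Proof.
move=> A0_ge0; have [Gghat _] := ghat_min.
have on_le : pen_on gstar <= pen_on ghat + pen_on diff.
  have := pen_onB ghat diff.
  by rewrite (_ : (fun j x => _) = gstar) //; apply: funext => j; apply: funext => x; ring.
have off_le : pen_off diff <= pen_off ghat + pen_off gstar.
  exact: pen_offB Gghat Ggstar.
have := basic_inequality; rewrite !Rpen_split.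
have := ler_wpM2l A0_ge0 on_le; have := ler_wpM2l A0_ge0 off_le; lra.
Qed.

Lemma oracle_inequality {xi0 kappa0 : R} :
  1 < xi0 -> (xi0 + 1) / (xi0 - 1) < A0 -> 0 < kappa0 ->
  compatibility X G nF lam w S kappa0 xi0 ->
  empnorm X (gsum diff) ^+ 2 + (A0 - 1) * Rpen diff
  <= oracle_K1 A0 kappa0 * \sum_(j < p | j \in S) lam j ^+ 2
     + oracle_K2 A0 xi0 * pen_off gstar.
Proof.
move=> xi0_gt1 A0_gt kappa0_gt0 compat.
have A0_ge0 : 0 <= A0 by rewrite ltW // (lt_trans ltr01) // (A0_gt1 xi0_gt1 A0_gt).
rewrite Rpen_split.
apply: cone_oracle_bound => //.
- exact: sqr_ge0.
- exact: pen_on_ge0.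
- exact: pen_off_ge0 G_diff.
- by apply: sumr_ge0 => j _; rewrite sqr_ge0.
- exact: pen_off_ge0 Ggstar.
- exact: cone_inequality.
- exact: compat G_diff.
Qed.

End OracleInequality.

End Penalty.

Section PowerBounds.
Context {R : realType}.
Implicit Types x a q : R.

Lemma qpow_ge0 x q : 0 <= qpow x q.
Proof. by rewrite /qpow; case: ifP => _; [case: ifP|exact: powR_ge0]. Qed.

(* Also for [q = 0], where [qpow x 0] is the indicator of [x > 0]. *)
Lemma ler_mul_qpow x a q : q <= 1 -> 0 < a -> 0 <= x <= a ->
  x <= a `^ (1 - q) * qpow x q.
Proof.
move=> q_le1 a0 /andP[x0 xa]; rewrite /qpow.
have [->|q_neq0] := eqVneq q 0.
  rewrite subr0 (powRr1 (ltW a0)); case: ltrP => [_|x_le0]; first by rewrite mulr1.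
  by rewrite mulr0.
have [->|x_neq0] := eqVneq x 0; first by rewrite powR0 // mulr0.
rewrite -{1}(powRr1 x0) -{1}(subrK q 1) powRD ?x_neq0 ?implybT //.
rewrite ler_wpM2r ?powR_ge0 //.
by apply: ge0_ler_powR; rewrite ?subr_ge0 ?nnegrE // ltW.
Qed.

Lemma ler_powR_qpow x a q : 0 <= q -> 0 < a -> a < x -> a `^ q <= qpow x q.
Proof.
move=> q_ge0 a0 ax; have x0 : 0 < x := lt_trans a0 ax; rewrite /qpow.
have [->|q_neq0] := eqVneq q 0; first by rewrite powRr0 x0.
by apply: ge0_ler_powR; rewrite ?nnegrE // ltW.
Qed.

Lemma powR_mulS {x} a b : 0 < x -> x `^ a * x `^ b = x `^ (a + b).
Proof. by move=> x0; rewrite powRD // (gt_eqF x0) implybT. Qed.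

End PowerBounds.

Section SparsityRate.
Context {R : realType} {p : nat}.
Context {q C0 lam : R} {a : 'I_p -> R}.
Hypotheses (q_ge0 : 0 <= q) (q_le1 : q <= 1) (C0_gt0 : 0 < C0) (lam_gt0 : 0 < lam)
  (a_ge0 : forall j, 0 <= a j).

Local Notation S := [set j | C0 * lam < a j]%SET.

Lemma sum_sqr_large_le :
  \sum_(j < p | j \in S) lam ^+ 2 <= C0 `^ (- q) * lam `^ (2 - q) * \sum_(j < p) qpow (a j) q.
Proof.
have C0lam_gt0 : 0 < C0 * lam by rewrite mulr_gt0.
have lam2E : lam ^+ 2 = C0 `^ (- q) * lam `^ (2 - q) * (C0 * lam) `^ q.
  rewrite powRM ?ltW // mulrACA powRN mulVf ?gt_eqF ?powR_gt0 // mul1r.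
  by rewrite powR_mulS // subrK -(powR_mulrn _ (ltW lam_gt0)).
rewrite mulr_sumr [leRHS](bigID (fun j => j \in S)) /=; apply: ler_wpDr.
- by apply: sumr_ge0 => j _; rewrite mulr_ge0 ?mulr_ge0 ?powR_ge0 ?qpow_ge0.
- apply: ler_sum => j; rewrite inE => /(ler_powR_qpow _ _ _ q_ge0 C0lam_gt0) le_a.
  by rewrite lam2E ler_wpM2l ?mulr_ge0 ?powR_ge0.
Qed.

Lemma sum_small_le :
  \sum_(j < p | j \notin S) lam * a j
    <= C0 `^ (1 - q) * lam `^ (2 - q) * \sum_(j < p) qpow (a j) q.
Proof.
have C0lam_gt0 : 0 < C0 * lam by rewrite mulr_gt0.
have lamE : lam * (C0 * lam) `^ (1 - q) = C0 `^ (1 - q) * lam `^ (2 - q).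
  rewrite powRM ?ltW // mulrCA -{1}(powRr1 (ltW lam_gt0)) powR_mulS //.
  by congr (_ * _ `^ _); ring.
rewrite mulr_sumr [leRHS](bigID (fun j => j \in S)) /=; apply: ler_wpDl.
- by apply: sumr_ge0 => j _; rewrite mulr_ge0 ?mulr_ge0 ?powR_ge0 ?qpow_ge0.
- apply: ler_sum => j; rewrite inE -leNgt => a_le.
  rewrite -lamE -mulrA ler_wpM2l ?(ltW lam_gt0) //.
  by apply: ler_mul_qpow => //; rewrite a_le a_ge0.
Qed.

End SparsityRate.

Lemma oracle_rate {R : realType} {p : nat} (k1 k2 q C0 C1 L lam w MF Mq : R)
    (a b : 'I_p -> R) :
  0 <= k1 -> 0 <= k2 -> 0 <= q <= 1 -> 0 < C0 -> 0 < C1 -> 0 < L -> lam = C1 * L ->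
  0 <= w <= L `^ (1 - q) -> 0 <= MF -> 0 <= Mq -> (forall j, 0 <= a j) ->
  \sum_(j < p) b j <= C1 * MF -> \sum_(j < p) qpow (a j) q <= C1 `^ q * Mq ->
  k1 * \sum_(j < p | j \in [set j | C0 * lam < a j]%SET) lam ^+ 2
    + k2 * (\sum_(j < p) lam * w * b j
            + \sum_(j < p | j \notin [set j | C0 * lam < a j]%SET) lam * a j)
  <= (k1 * C0 `^ (- q) + k2 * (1 + C0 `^ (1 - q))) * C1 ^+ 2 * (MF + Mq) * L `^ (2 - q).
Proof.
move=> k1_ge0 k2_ge0 /andP[q_ge0 q_le1] C0_gt0 C1_gt0 L_gt0 lamE /andP[w_ge0 w_le]
  MF_ge0 Mq_ge0 a_ge0 sum_b sum_a.
have lam_gt0 : 0 < lam by rewrite lamE mulr_gt0.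
set S := [set j | C0 * lam < a j]%SET.
set M := C1 ^+ 2 * L `^ (2 - q).
have lamqE : lam `^ (2 - q) * C1 `^ q = M.
  rewrite lamE powRM ?ltW // mulrAC powR_mulS // subrK.
  by rewrite /M (powR_mulrn 2 (ltW C1_gt0)).
have large_le : \sum_(j < p | j \in S) lam ^+ 2 <= C0 `^ (- q) * M * Mq.
  apply: le_trans (sum_sqr_large_le q_ge0 C0_gt0 lam_gt0) _.
  by rewrite -lamqE -!mulrA ler_wpM2l ?powR_ge0 // ler_wpM2l ?powR_ge0.
have small_le : \sum_(j < p | j \notin S) lam * a j <= C0 `^ (1 - q) * M * Mq.
  apply: le_trans (sum_small_le q_le1 C0_gt0 lam_gt0 a_ge0) _.
  by rewrite -lamqE -!mulrA ler_wpM2l ?powR_ge0 // ler_wpM2l ?powR_ge0.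
have smooth_le : \sum_(j < p) lam * w * b j <= M * MF.
  have lamw_le : lam * w * C1 <= M.
    have LqE : L `^ (2 - q) = L * L `^ (1 - q).
      by rewrite -{2}(powRr1 (ltW L_gt0)) powR_mulS //; congr (_ `^ _); ring.
    rewrite /M LqE lamE (_ : C1 * L * w * C1 = C1 ^+ 2 * L * w); last by ring.
    by rewrite mulrA ler_wpM2l // mulr_ge0 ?sqr_ge0 ?ltW.
  rewrite -mulr_sumr; apply: le_trans (_ : lam * w * (C1 * MF) <= _).
    by rewrite ler_wpM2l // mulr_ge0 // ltW.
  by rewrite mulrA ler_wpM2r.
apply: le_trans (lerD (ler_wpM2l k1_ge0 large_le)
  (ler_wpM2l k2_ge0 (lerD smooth_le small_le))) _.
rewrite -subr_ge0 (_ : _ - _ = k1 * C0 `^ (- q) * M * MF + k2 * M * Mq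
  + k2 * C0 `^ (1 - q) * M * MF); last by rewrite /M; ring.
by rewrite !addr_ge0 ?mulr_ge0 ?powR_ge0 ?(ltW C1_gt0).
Qed.

Lemma empinner_le_homogeneous {R : realType} {n dim : nat} (X : 'I_n -> 'rV[R]_dim)
    (Gj : set ('rV[R]_dim -> R)) (nFj : ('rV[R]_dim -> R) -> R) (e : 'I_n -> R)
    (delta r : R) :
  (0 < n)%N -> 0 < delta ->
  (forall a f, Gj f -> Gj (fun x => a * f x)) ->
  (forall f, Gj f -> 0 <= nFj f) ->
  (forall a f, Gj f -> nFj (fun x => a * f x) = `|a| * nFj f) ->
  (forall f, Gj f -> nFj f + empnorm X f / delta <= 1 -> `|empinner X e f| <= r) ->
  forall f, Gj f -> `|empinner X e f| <= r * (nFj f + empnorm X f / delta).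
Proof.
move=> n_gt0 delta_gt0 GZ nF_ge0 nFZ ball_le f Gf.
set c := nFj f + empnorm X f / delta.
have c_ge0 : 0 <= c by rewrite addr_ge0 ?nF_ge0 ?divr_ge0 ?empnorm_ge0 ?ltW.
have [c_eq0|c_neq0] := eqVneq c 0.
  have norm_eq0 : empnorm X f = 0.
    have : empnorm X f / delta <= 0 by rewrite -c_eq0 /c lerDr nF_ge0.
    rewrite pmulr_lle0 ?invr_gt0 // => norm_le0.
    by apply/eqP; rewrite eq_le norm_le0 empnorm_ge0.
  suff -> : empinner X e f = 0 by rewrite normr0 c_eq0 mulr0.
  by rewrite /empinner big1 ?mulr0 // => i _; rewrite (empnorm_eq0 _ _ n_gt0 norm_eq0) mulr0.
have c_gt0 : 0 < c by rewrite lt0r c_neq0.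
have := ball_le _ (GZ c^-1 f Gf).
rewrite nFZ // empnormZ empinnerZ normrM ger0_norm ?invr_ge0 // -mulrA -mulrDr.
by rewrite mulVf // lexx ler_pdivrMl // mulrC => /(_ isT).
Qed.

(* The exponent of [gam] is chosen so that the entropy term [n^-1/2 psi(w)] of
   the concentration bound equals [gam * w]. *)
Lemma tuning_balance {R : realType} {B0 N q beta : R} :
  0 < B0 -> 0 < N -> 2 + beta * (1 - q) != 0 ->
  let gam := B0 `^ (2 / (2 + beta * (1 - q))) * N `^ (- (1 / (2 + beta * (1 - q)))) in
  Num.sqrt (N^-1) * (B0 * (gam `^ (1 - q)) `^ (1 - beta / 2)) = gam * gam `^ (1 - q).
Proof.
move=> B0_gt0 N_gt0 D_neq0 gam; rewrite /gam -(lnK B0_gt0) -(lnK N_gt0).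
have sqrt_expR c : Num.sqrt (expR c) = expR (c / 2) :> R.
  have -> : expR c = expR (c / 2) ^+ 2 by rewrite expr2 -expRD; congr expR; field.
  by rewrite sqrtr_sqr ger0_norm // expR_ge0.
rewrite -!expRM -expRD -!expRM -expRN sqrt_expR -!expRD; congr expR.
by field.
Qed.

Lemma noise_event {R : realType} {d : measure_display} {Omega : measurableType d}
    (P : probability Omega R) {n p dim : nat} {X : 'I_n -> 'rV[R]_dim}
    {coords : 'I_p -> {set 'I_dim}} {G : 'I_p -> set ('rV[R]_dim -> R)}
    {nF : 'I_p -> ('rV[R]_dim -> R) -> R} {eps : 'I_n -> Omega -> R}
    {C1 w psi gam epsilon : R} :
  (0 < n)%N -> (0 < p)%N -> 0 < epsilon < 1 ->
  additive_structure coords G nF -> 0 < C1 -> concentration P X eps C1 ->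
  0 < w -> (forall j, (entropy_integral X (Gdelta X G nF j w) w <= psi%:E)%E) ->
  Num.sqrt (n%:R^-1) * psi = gam * w ->
  let lam := C1 * (gam + Num.sqrt (ln (p%:R / epsilon) / n%:R)) in
  exists2 E : set Omega, measurable E /\ ((1 - epsilon)%:E <= P E)%E &
    forall omega, E omega -> forall j f, G j f ->
      `|empinner X (fun i => eps i omega) f| <= lam * (empnorm X f + w * nF j f).
Proof.
move=> n_gt0 p_gt0 /andP[eps_gt0 eps_lt1] hG C1_gt0 conc w_gt0 entropy balance lam.
set t := ln (p%:R / epsilon).
have p_eps_gt1 : 1 < p%:R / epsilon.
  by rewrite ltr_pdivlMr // mul1r (lt_le_trans eps_lt1) // ler1n.
have t_gt0 : 0 < t by rewrite ln_gt0.
have ball_event j : exists E : set Omega,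
    [/\ measurable E, ((1 - expR (- t))%:E <= P E)%E &
      forall omega, E omega -> forall f, Gdelta X G nF j w f ->
        `|empinner X (fun i => eps i omega) f| / C1
          <= Num.sqrt (n%:R^-1) * psi + w * Num.sqrt (t / n%:R)].
  apply: conc => // f [Gf ball].
  have [_ _ _ _ [nF_ge0 _ _]] := hG j.
  by rewrite -[w]mul1r -ler_pdivrMr // (le_trans _ ball) // lerDr nF_ge0.
have [E hE] := choice ball_event.
have mE j : measurable (E j) by case: (hE j).
have PE j : ((1 - expR (- t))%:E <= P (E j))%E by case: (hE j).
have [F [mF PF] FE] := probability_bigcap_ge P mE PE.
exists F.
  split=> //; move: PF; rewrite expRN lnK ?posrE ?(lt_trans ltr01) // invf_div.
  by rewrite mulrCA divff ?mulr1 // pnatr_eq0 -lt0n.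
move=> omega Fomega j f Gf; have [_ _ GZ _ [nF_ge0 nFZ _]] := hG j.
have := empinner_le_homogeneous X (G j) (nF j) (fun i => eps i omega) w
  (C1 * (w * (gam + Num.sqrt (t / n%:R)))) n_gt0 w_gt0 GZ nF_ge0 nFZ _ f Gf.
rewrite (_ : _ * _ * _ = lam * (empnorm X f + w * nF j f)).
  apply=> g Gg ball; rewrite -ler_pdivrMl // mulrC.
  have [_ _ /(_ omega (FE j omega Fomega) g (conj Gg ball))] := hE j.
  by rewrite mulrDr [w * gam]mulrC -balance.
by rewrite /lam; field; rewrite gt_eqF.
Qed.

Theorem corollary3 (R : realType) (q A0 C0 xi0 kappa0 : R) :
  0 <= q <= 1 -> 0 < C0 -> 0 < kappa0 -> 1 < xi0 ->
  (xi0 + 1) / (xi0 - 1) < A0 ->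
  exists K : R,
  forall (d : measure_display) (Omega : measurableType d) (P : probability Omega R)
    (n p dim : nat) (X : 'I_n -> 'rV[R]_dim) (coords : 'I_p -> {set 'I_dim})
    (G : 'I_p -> set ('rV[R]_dim -> R)) (nF : 'I_p -> ('rV[R]_dim -> R) -> R)
    (gstar : 'I_p -> ('rV[R]_dim -> R)) (eps : 'I_n -> Omega -> R)
    (D0 D1 C1 MF Mq B0 beta0 epsilon : R),
  (0 < n)%N -> (0 < p)%N ->
  additive_structure coords G nF ->
  (forall j, G j (gstar j)) ->
  0 < MF -> 0 < Mq ->
  \sum_(j < p) nF j (gstar j) <= C1 * MF ->
  \sum_(j < p) qpow (empnorm X (gstar j)) q <= C1 `^ q * Mq ->
  0 < B0 -> 0 < beta0 < 2 ->
  (forall delta, 0 < delta <= 1 -> forall j : 'I_p,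
     (entropy_integral X (Gdelta X G nF j delta) delta
        <= (B0 * delta `^ (1 - beta0 / 2))%:E)%E) ->
  subgaussian P eps D0 D1 ->
  0 < C1 -> concentration P X eps C1 ->
  0 < epsilon < 1 ->
  let gam := B0 `^ (2 / (2 + beta0 * (1 - q))) * n%:R `^ (- (1 / (2 + beta0 * (1 - q)))) in
  let w := gam `^ (1 - q) in
  let lam := C1 * (gam + Num.sqrt (ln (p%:R / epsilon) / n%:R)) in
  compatibility X G nF (fun _ => lam) (fun _ => w)
    [set j : 'I_p | C0 * lam < empnorm X (gstar j)]%SET kappa0 xi0 ->
  0 < w <= 1 ->
  exists E : set Omega,
    [/\ measurable E, ((1 - epsilon)%:E <= P E)%E &
    forall omega, E omega ->
      let Y := fun i : 'I_n => gsum gstar (X i) + eps i omega in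
      forall ghat : 'I_p -> ('rV[R]_dim -> R),
        is_minimizer X G nF (fun _ => lam) (fun _ => lam * w) A0 Y ghat ->
        let diff := fun j x => ghat j x - gstar j x in
        empnorm X (gsum diff) ^+ 2
          + (A0 - 1) * Rpen X nF (fun _ => lam) (fun _ => lam * w) diff
        <= K * C1 ^+ 2 * (MF + Mq)
             * (gam + Num.sqrt (ln (p%:R / epsilon) / n%:R)) `^ (2 - q)].
Proof.
move=> q01 C0_gt0 kappa0_gt0 xi0_gt1 A0_gt.
exists (oracle_K1 A0 kappa0 * C0 `^ (- q) + oracle_K2 A0 xi0 * (1 + C0 `^ (1 - q))).
move=> d Omega P n p dim X coords G nF gstar eps D0 D1 C1 MF Mq B0 beta0 epsilon
  n_gt0 p_gt0 hG Ggstar MF_gt0 Mq_gt0 sum_nF sum_qpow B0_gt0 /andP[beta0_gt0 _]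
  entropy _ C1_gt0 conc eps01 gam w lam compat w01.
have [w_gt0 _] := andP w01; have [_ q_le1] := andP q01.
set L := gam + Num.sqrt (ln (p%:R / epsilon) / n%:R).
have gam_gt0 : 0 < gam by rewrite /gam mulr_gt0 ?powR_gt0 ?ltr0n.
have L_ge_gam : gam <= L by rewrite /L lerDl sqrtr_ge0.
have L_gt0 : 0 < L := lt_le_trans gam_gt0 L_ge_gam.
have balance : Num.sqrt (n%:R^-1) * (B0 * w `^ (1 - beta0 / 2)) = gam * w.
  have n_pos : 0 < n%:R :> R by rewrite ltr0n.
  have : 0 <= beta0 * (1 - q) by rewrite mulr_ge0 ?subr_ge0 // ltW.
  by move=> bq_ge0; apply: tuning_balance B0_gt0 n_pos _; rewrite gt_eqF //; lra.
have [E [mE PE] noise] := noise_event P n_gt0 p_gt0 eps01 hG C1_gt0 conc w_gt0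
  (fun j => entropy w w01 j) balance.
exists E; split=> // omega Eomega Y ghat ghat_min.
apply: le_trans (oracle_inequality hG (fun=> ltW (mulr_gt0 C1_gt0 L_gt0)) (fun=> ltW w_gt0)
  Ggstar (noise omega Eomega) ghat_min xi0_gt1 A0_gt kappa0_gt0 compat) _.
have w_le : 0 <= w <= L `^ (1 - q).
  by rewrite (ltW w_gt0) ge0_ler_powR ?nnegrE ?subr_ge0 // ltW.
exact: oracle_rate oracle_K1_ge0 (oracle_K2_ge0 xi0_gt1 A0_gt) q01 C0_gt0 C1_gt0 L_gt0
  erefl w_le (ltW MF_gt0) (ltW Mq_gt0) (fun j => empnorm_ge0 X (gstar j)) sum_nF sum_qpow.
Qed.
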